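(* Let $K\ge2$, $n\ge1$, and let $\pi$ be a probability distribution on $[K]^n$. Then for all $c\neq c'$ in $[K]^n$ with $\pi(c)>0$, \[ P_{\mathrm{R}}(c,c')\;\ge\;\frac{1}{2(K-1)}\,P_{\mathrm{MG}}(c,c'). \]
   Context: Notation: $[K]=\{1,\dots,K\}$; $n_k(c)=\#\{i:c_i=k\}$; $c_{-i}$ is $c$ without its $i$-th entry, $(c_{-i},k)$ is $c$ with $c_i$ replaced by $k$; $\pi(c_i=k\mid c_{-i})=\pi((c_{-i},k))/\sum_{j}\pi((c_{-i},j))$. $\mathcal{K}=\{(k,k')\in[K]^2:k<k'\}$, $p_c(k,k')=\frac{n_k(c)+n_{k'}(c)}{(K-1)n}$. $r(c,i,k_-,k_+)=\frac{n_{k_-}(c)}{n_{k_+}(c)+1}\cdot\frac{\pi(c_i=k_+\mid c_{-i})}{\pi(c_i=k_-\mid c_{-i})}$. $P_{\mathrm{MG}}(c,c')=\frac1n\sum_{i=1}^n\mathbb 1(c'_{-i}=c_{-i})\pi(c_i=c'_i\mid c_{-i})$ (random-scan Gibbs sampler). $P_{\mathrm{R}}$: from $c$, sample $(k,k')\sim p_c$; set $(k_-,k_+)=(k,k')$ or $(k',k)$ with probability $1/2$ each; if $n_{k_-}(c)=0$ stay at $c$; otherwise pick $i$ uniformly from $\{i':c_{i'}=k_-\}$ and move to $(c_{-i},k_+)$ with probability $\min\{1,r(c,i,k_-,k_+)\}$, else stay at $c$. *)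

From HB Require Import structures.
From mathcomp Require Import all_boot all_order all_algebra.
Set Implicit Arguments. Unset Strict Implicit. Unset Printing Implicit Defensive.
Import Order.TTheory GRing.Theory Num.Theory.
Local Open Scope ring_scope.

Section Defs.
Variables (R : realFieldType) (n K : nat).

(* configurations c in [K]^n; labels 1..K are represented by 'I_K = {0..K-1} *)
Definition config := {ffun 'I_n -> 'I_K}.

Definition upd (c : config) (i : 'I_n) (k : 'I_K) : config :=
  [ffun j => if j == i then k else c j].

Definition nk (c : config) (k : 'I_K) : nat := #|[pred i | c i == k]|.

Definition is_dist (pi : config -> R) : Prop :=
  (forall c, 0 <= pi c) /\ \sum_(c : config) pi c = 1.

Definition condp (pi : config -> R) (c : config) (i : 'I_n) (k : 'I_K) : R :=
  pi (upd c i k) / \sum_(j : 'I_K) pi (upd c i j).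

Definition P_MG (pi : config -> R) (c c' : config) : R :=
  n%:R^-1 * \sum_(i : 'I_n)
    ((c' == upd c i (c' i))%:R * condp pi c i (c' i)).

Definition pc (c : config) (k k' : 'I_K) : R :=
  (nk c k + nk c k')%:R / ((K - 1) * n)%:R.

Definition rratio (pi : config -> R) (c : config) (i : 'I_n) (km kp : 'I_K) : R :=
  (nk c km)%:R / ((nk c kp)%:R + 1) * (condp pi c i kp / condp pi c i km).

(* probability of going from c to c' once the ordered pair (k_-,k_+) is chosen *)
Definition move_prob (pi : config -> R) (c c' : config) (km kp : 'I_K) : R :=
  if nk c km == 0%N then (c' == c)%:R
  else (nk c km)%:R^-1 *
       \sum_(i : 'I_n | c i == km)
          (Num.min 1 (rratio pi c i km kp) * (c' == upd c i kp)%:R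
           + (1 - Num.min 1 (rratio pi c i km kp)) * (c' == c)%:R).

Definition P_R (pi : config -> R) (c c' : config) : R :=
  \sum_(k : 'I_K) \sum_(k' : 'I_K | (k < k')%N)
     pc c k k' * (2^-1 * move_prob pi c c' k k' + 2^-1 * move_prob pi c c' k' k).

End Defs.

From HB Require Import structures.
From mathcomp Require Import all_boot all_order all_algebra.
From mathcomp Require Import ring lra.
Import Order.TTheory GRing.Theory Num.Theory.
Local Open Scope ring_scope.
Set Implicit Arguments. Unset Strict Implicit.

(* If c' differs from c only at site i, the Gibbs sampler reaches c' with
   probability pi(c_i = c'_i | c_{-i}) / n. The kernel P_R reaches c' at least
   through the ordered pair (k_-, k_+) = (c_i, c'_i): it is drawn with
   probability (n_{k_-} + n_{k_+}) / (2 (K-1) n), then i is picked with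
   probability 1 / n_{k_-} and accepted with probability min(1, r).  So it
   suffices that (n_{k_-} + n_{k_+}) / n_{k_-} * min(1, r) dominates the
   conditional probability q of c'_i, which holds because the count factor
   (n_{k_-} + n_{k_+}) / (n_{k_+} + 1) in r is at least 1 and the conditional
   probability p of c_i in the denominator of r is at most 1. *)

Lemma le_weighted_acceptance (R : realFieldType) (a b p q : R) :
  1 <= a -> 0 <= b -> 0 < p -> p <= 1 -> 0 <= q -> q <= 1 ->
  q <= (a + b) / a * Num.min 1 (a / (b + 1) * (q / p)).
Proof.
move=> a_ge1 b_ge0 p_gt0 p_le1 q_ge0 q_le1.
have a_gt0 : 0 < a by lra.
have b1_gt0 : 0 < b + 1 by lra.
have ab_ge1 : 1 <= (a + b) / a by rewrite ler_pdivlMr // mul1r; lra.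
rewrite minr_pMr ?(le_trans ler01) // le_min mulr1 (le_trans q_le1) //=.
have -> : (a + b) / a * (a / (b + 1) * (q / p)) = (a + b) / (b + 1) * (q / p).
  by field; rewrite !gt_eqF.
have q_le_qp : q <= q / p by rewrite ler_pdivlMr // ler_piMr.
apply: (le_trans q_le_qp); apply: ler_peMl; first exact: divr_ge0 q_ge0 (ltW p_gt0).
by rewrite ler_pdivlMr // mul1r; lra.
Qed.

Lemma min1_ge0 (R : realFieldType) (x : R) : 0 <= x -> 0 <= Num.min 1 x.
Proof. by move=> x_ge0; rewrite le_min ler01. Qed.

Section Configurations.
Variables (n K : nat).
Implicit Types (c : config n K) (i : 'I_n) (k : 'I_K).

Lemma upd_id c i : upd c i (c i) = c.
Proof. by apply/ffunP => j; rewrite ffunE; case: eqP => // ->. Qed.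

Lemma upd_neq c i k : k != c i -> upd c i k != c.
Proof. by apply: contraNneq => /ffunP/(_ i); rewrite ffunE eqxx => ->. Qed.

Lemma upd_single_site c c' i : c' == upd c i (c' i) -> c != c' ->
  exists2 k, k != c i & c' = upd c i k.
Proof.
move=> /eqP c'_upd c_neq; exists (c' i) => //.
by apply: contraNneq c_neq => eq_i; rewrite c'_upd eq_i upd_id.
Qed.

Lemma nk_gt0 c i : (0 < nk c (c i))%N.
Proof. by apply/card_gt0P; exists i; rewrite inE. Qed.

End Configurations.

Section Kernels.
Variables (R : realFieldType) (n K : nat) (pi : config n K -> R).
Hypothesis pi_ge0 : forall c, 0 <= pi c.
Implicit Types (c : config n K) (i : 'I_n) (k : 'I_K).

Lemma condp_ge0 c i k : 0 <= condp pi c i k.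
Proof. by rewrite divr_ge0 // sumr_ge0. Qed.

Lemma condp_le1 c i k : condp pi c i k <= 1.
Proof.
rewrite /condp; have [->|S_neq0] := eqVneq (\sum_j pi (upd c i j)) 0.
  by rewrite invr0 mulr0.
have S_gt0 : 0 < \sum_j pi (upd c i j) by rewrite lt0r S_neq0 sumr_ge0.
by rewrite ler_pdivrMr // mul1r (bigD1 k) //= lerDl sumr_ge0.
Qed.

Lemma condp_gt0 c i : 0 < pi c -> 0 < condp pi c i (c i).
Proof.
move=> pic_gt0; rewrite /condp upd_id divr_gt0 //.
by rewrite (lt_le_trans pic_gt0) // (bigD1 (c i)) //= upd_id lerDl sumr_ge0.
Qed.

Lemma rratio_ge0 c i km kp : 0 <= rratio pi c i km kp.
Proof. by rewrite mulr_ge0 // divr_ge0 ?condp_ge0 ?addr_ge0. Qed.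

Lemma move_prob_ge0 c c' km kp : 0 <= move_prob pi c c' km kp.
Proof.
rewrite /move_prob; case: ifP => _; first by rewrite ler0n.
rewrite mulr_ge0 ?invr_ge0 // sumr_ge0 // => i _.
by rewrite addr_ge0 ?mulr_ge0 ?min1_ge0 ?rratio_ge0 // subr_ge0 ge_min lexx.
Qed.

Lemma pc_ge0 c k k' : 0 <= pc R c k k'.
Proof. by rewrite divr_ge0. Qed.

Lemma P_R_summand_ge0 c c' k k' :
  0 <= pc R c k k' * (2^-1 * move_prob pi c c' k k' + 2^-1 * move_prob pi c c' k' k).
Proof. by rewrite mulr_ge0 ?pc_ge0 // addr_ge0 // mulr_ge0 ?invr_ge0 ?move_prob_ge0. Qed.

Lemma P_R_ge0 c c' : 0 <= P_R pi c c'.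
Proof. by rewrite !sumr_ge0 // => k _; rewrite sumr_ge0 // => k' _; apply: P_R_summand_ge0. Qed.

Lemma P_R_ge_ordered_pair c c' km kp : km != kp ->
  pc R c km kp * (2^-1 * move_prob pi c c' km kp) <= P_R pi c c'.
Proof.
have summand_le (a b : 'I_K) : (a < b)%N ->
    pc R c a b * (2^-1 * move_prob pi c c' a b + 2^-1 * move_prob pi c c' b a)
    <= P_R pi c c'.
  move=> ab; rewrite /P_R (bigD1 a) //= (bigD1 b) //= -addrA lerDl.
  rewrite addr_ge0 ?sumr_ge0 // => [k' _|k _]; first exact: P_R_summand_ge0.
  by rewrite sumr_ge0 // => k' _; apply: P_R_summand_ge0.
have half_le (x y : R) : 0 <= y -> 2^-1 * x <= 2^-1 * x + 2^-1 * y.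
  by move=> y_ge0; rewrite lerDl mulr_ge0 // invr_ge0.
move=> km_neq_kp; have [lt|gt] := ltnP km kp.
  apply: le_trans (summand_le _ _ lt); rewrite ler_wpM2l ?pc_ge0 //.
  exact/half_le/move_prob_ge0.
have lt : (kp < km)%N by rewrite ltn_neqAle gt andbT; apply: contra_neq km_neq_kp => /val_inj ->.
apply: le_trans (summand_le _ _ lt); rewrite /pc addnC ler_wpM2l ?divr_ge0 //.
by rewrite addrC; apply/half_le/move_prob_ge0.
Qed.

Lemma move_prob_upd_ge c i k : k != c i ->
  (nk c (c i))%:R^-1 * Num.min 1 (rratio pi c i (c i) k)
  <= move_prob pi c (upd c i k) (c i) k.
Proof.
move=> k_neq; rewrite /move_prob eqn0Ngt nk_gt0 /= ler_wpM2l ?invr_ge0 //.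
rewrite (bigD1 i) //= eqxx (negbTE (upd_neq k_neq)) mulr1 mulr0 addr0 lerDl.
rewrite sumr_ge0 // => j _.
by rewrite addr_ge0 ?mulr_ge0 ?min1_ge0 ?rratio_ge0 // subr_ge0 ge_min lexx.
Qed.

Lemma P_MG_upd c i k : k != c i ->
  P_MG pi c (upd c i k) = n%:R^-1 * condp pi c i k.
Proof.
move=> k_neq; rewrite /P_MG (bigD1 i) //= ffunE eqxx eqxx mul1r big1 ?addr0 //.
move=> j j_neq; rewrite ffunE (negbTE j_neq) upd_id.
by rewrite (negbTE (upd_neq k_neq)) mul0r.
Qed.

Lemma P_R_upd_ge c i k : k != c i ->
  (2 * (K - 1)%:R * n%:R)^-1 *
    (((nk c (c i))%:R + (nk c k)%:R) / (nk c (c i))%:R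
     * Num.min 1 (rratio pi c i (c i) k))
  <= P_R pi c (upd c i k).
Proof.
move=> k_neq; have ci_neq : c i != k by rewrite eq_sym.
apply: le_trans (P_R_ge_ordered_pair c _ ci_neq).
have half_ge0 : 0 <= 2^-1 :> R by rewrite invr_ge0.
apply: le_trans
  (ler_wpM2l (pc_ge0 c _ _) (ler_wpM2l half_ge0 (move_prob_upd_ge k_neq))).
by rewrite /pc natrD natrM !invfM; lra.
Qed.

End Kernels.

Theorem mainTheorem2 (R : realFieldType) (K n : nat) :
  (2 <= K)%N -> (1 <= n)%N ->
  forall pi : config n K -> R, is_dist pi ->
  forall c c' : config n K, c != c' -> 0 < pi c ->
  (2 * (K - 1)%:R)^-1 * P_MG pi c c' <= P_R pi c c'.
Proof.
move=> _ _ pi [pi_ge0 _] c c' c_neq pic_gt0.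
have [i c'_upd|no_site] := pickP (fun i => c' == upd c i (c' i)); last first.
  rewrite /P_MG big1 ?mulr0 ?P_R_ge0 // => i _.
  by rewrite no_site mul0r.
have [k k_neq ->] := upd_single_site c'_upd c_neq.
rewrite P_MG_upd // mulrA -invfM; apply: le_trans (P_R_upd_ge pi_ge0 k_neq).
rewrite ler_wpM2l ?invr_ge0 ?mulr_ge0 ?ler0n //.
have nk_ge1 : 1 <= (nk c (c i))%:R :> R by rewrite ler1n nk_gt0.
exact: le_weighted_acceptance nk_ge1 (ler0n _ _) (condp_gt0 pi_ge0 i pic_gt0)
  (condp_le1 pi_ge0 _ _ _) (condp_ge0 pi_ge0 _ _ _) (condp_le1 pi_ge0 _ _ _).
Qed.
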